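(* Let $k \ge 2$ be an integer. Let $V_0 = \{0\}$, $V_n = \{1,\dots,k\}^n$ for $n \in \mathbb{N}$, and $V = \bigcup_{n \ge 0} V_n$. Define $\pi \colon V \to V \cup \{-1\}$ by $\pi(0) = -1$, $\pi(v) = 0$ for $v \in V_1$, and $\pi(v_1,\dots,v_n) = (v_1,\dots,v_{n-1})$ for $n \ge 2$. Let $G_k$ be the graph with vertex set $V$ whose edges are the pairs $\{v,v'\} \subset V$ with $\pi(v) = v'$ or $\pi(v') = v$ (the infinite rooted $k$-ary tree). Then $\chi_{\star,1}(G_k) = 2$ and $\chi_{\star,2}(G_k) = k+1$.
   Context: Let $G$ be a graph with vertex set $V$, with the graph (shortest path) distance, and let $n, m \in \mathbb{N}$. A function $f \colon V \to \{1,\dots,n\}$ is an $m$-distance clustered $n$-coloring of $G$ if there is a constant $K_\star > 0$ such that for every $i$, every connected component of the subgraph induced by $f^{-1}[\{i\}]$ has at most $K_\star$ vertices, and the distance in $G$ between any two distinct such components (of the same color $i$) is bigger than $m$. The $m$-distance clustered chromatic number $\chi_{\star,m}(G)$ is the least $n \in \mathbb{N}$ for which an $m$-distance clustered $n$-coloring of $G$ exists, and $\infty$ if none exists. *)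

From mathcomp Require Import all_boot.
Set Implicit Arguments. Unset Strict Implicit. Unset Printing Implicit Defensive.

Section Clustered.
Variable T : eqType.
Variable adj : rel T.

Definition dist_le (m : nat) (x y : T) : Prop :=
  exists p : seq T, [/\ path adj x p, last x p = y & size p <= m].

(* y lies in the connected component of x in the subgraph induced by the
   colour class f^{-1}[{f x}] : a walk from x to y all of whose vertices have
   colour f x. *)
Definition mono_conn (n : nat) (f : T -> 'I_n) (x y : T) : Prop :=
  exists p : seq T,
    [/\ path (fun a b => adj a b && (f b == f x)) x p & last x p = y].

Definition comp_card_le (n : nat) (f : T -> 'I_n) (x : T) (K : nat) : Prop :=
  forall s : seq T, uniq s -> (forall y, y \in s -> mono_conn f x y) ->
    size s <= K.

Definition dist_clustered_coloring (m n : nat) (f : T -> 'I_n) : Prop :=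
  exists K : nat, 0 < K /\
    (forall x : T, comp_card_le f x K) /\
    (forall x y : T, f x = f y -> ~ mono_conn f x y ->
       forall a b : T, mono_conn f x a -> mono_conn f y b -> ~ dist_le m a b).

Definition dist_clustered_colorable (m n : nat) : Prop :=
  exists f : T -> 'I_n, @dist_clustered_coloring m n f.

(* chi_{*,m}(G) = c, where c = Some n means the finite value n and None means
   infinity: n is the least natural number admitting such a colouring. *)
Definition is_dist_clustered_chi (m : nat) (c : option nat) : Prop :=
  match c with
  | Some n => dist_clustered_colorable m n /\
              (forall n', n' < n -> ~ dist_clustered_colorable m n')
  | None => forall n, ~ dist_clustered_colorable m n
  end.
End Clustered.

(* The infinite rooted k-ary tree G_k.  A vertex (v_1,...,v_n) in
   {1..k}^n is represented by a sequence of length n over 'I_k (label i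
   stands for i+1); the root 0 (V_0) is the empty sequence. *)
Definition kary_vertex (k : nat) := seq 'I_k.

(* pi(v) = v' for v not the root: drop the last coordinate
   (for v in V_1 this gives the root [::]). pi(root) = -1 is not a vertex. *)
Definition kary_parent_is (k : nat) (v v' : kary_vertex k) : bool :=
  (v != [::]) && (v' == take (size v).-1 v).

Definition kary_adj (k : nat) : rel (kary_vertex k) :=
  fun v v' => kary_parent_is v v' || kary_parent_is v' v.

(* For m = 1, colouring by depth parity is proper, so every cluster is a single
   vertex; one colour fails because the whole tree is then one infinite cluster.

   For m = 2 with k + 1 colours, the clusters are the stars formed by an
   even-depth vertex and its k children; the k grandchildren reached through a
   child of a star centre v receive the k colours different from that of v, so
   same-coloured vertices at distance at most 2 always lie in one star.
   With only k colours, a vertex u and its k children contain two vertices of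
   the same colour. Two such siblings are at distance 2, hence in one cluster,
   and a cluster through a child of colour different from u's never leaves the
   subtree of that child; so some child of u has the colour of u. Following
   such children from the root yields an infinite cluster. *)

From mathcomp Require Import all_boot.
Set Implicit Arguments. Unset Strict Implicit.

Section ClusteredColourings.
Variables (T : eqType) (adj : rel T) (n : nat) (f : T -> 'I_n).

Lemma mono_conn_refl x : mono_conn adj f x x.
Proof. by exists [::]. Qed.

Lemma mono_conn_rcons x y z :
  mono_conn adj f x y -> adj y z -> f z = f x -> mono_conn adj f x z.
Proof.
case=> p [hp hy] hyz hz; exists (rcons p z).
by rewrite rcons_path hp last_rcons hy hyz hz eqxx.
Qed.

Lemma mono_conn_invariant (A : Type) (phi : T -> A) x y :
  (forall a b, adj a b -> f a = f b -> phi a = phi b) ->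
  mono_conn adj f x y -> phi y = phi x.
Proof.
move=> phiE [p [hp <-]].
suff: forall z, f z = f x ->
    path (fun a b => adj a b && (f b == f x)) z p -> phi (last z p) = phi z.
  exact.
elim: p {hp} => [|c p IHp] z fz //= /andP [/andP [hzc /eqP fc] hp].
by rewrite (IHp c fc hp); apply/esym/phiE; rewrite // fz fc.
Qed.

Lemma mono_conn_colour x y : mono_conn adj f x y -> f y = f x.
Proof. exact: mono_conn_invariant. Qed.

Lemma mono_comp_unbounded (h : T -> nat) x K :
  (forall v, exists2 w, adj v w & f w = f v /\ h w = (h v).+1) ->
  ~ comp_card_le adj f x K.
Proof.
move=> ascend hK.
have deep m : exists2 w, mono_conn adj f x w & h w = h x + m.
  elim: m => [|m [w xw hw]].
    by exists x; [apply: mono_conn_refl | rewrite addn0].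
  have [w' ww' [fw' hw']] := ascend w; exists w'; last by rewrite hw' hw addnS.
  by apply: (mono_conn_rcons xw ww'); rewrite fw' (mono_conn_colour xw).
have chain m : exists2 s, map h s = iota (h x) m &
    {in s, forall y, mono_conn adj f x y}.
  elim: m => [|m [s hs sx]]; first by exists [::].
  have [w xw hw] := deep m; exists (rcons s w).
    by rewrite map_rcons hs -addn1 iotaD hw cats1.
  by move=> y; rewrite mem_rcons inE => /predU1P [->|/sx].
have [s hs sx] := chain K.+1.
have uniq_s : uniq s by apply: (map_uniq (f := h)); rewrite hs iota_uniq.
by move: (hK s uniq_s sx); rewrite -(size_map h) hs size_iota ltnn.
Qed.

Lemma proper_colouring_clustered1 :
  (forall x y, adj x y -> f x != f y) -> dist_clustered_coloring adj 1 f.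
Proof.
move=> proper.
have single x y : mono_conn adj f x y -> y = x.
  case=> [[|c p] [/= + <-]] //.
  by case/andP=> /andP [/proper + /eqP fc]; rewrite fc eqxx.
exists 1; split=> //; split.
  move=> x s us sx; apply: (uniq_leq_size (s2 := [:: x])) => // y /sx /single ->.
  exact: mem_head.
move=> x y fxy nxy a b /single -> /single -> [[|c [|? ?]]] [/= + xy ?] //; subst.
  by move=> _; exact/nxy/mono_conn_refl.
by rewrite andbT => /proper; rewrite fxy eqxx.
Qed.
End ClusteredColourings.

Lemma prefix_rcons_split (T : eqType) (s t : seq T) x :
  prefix s (rcons t x) -> s = rcons t x \/ prefix s t.
Proof.
case/prefixP=> r; case/lastP: r => [|r y]; first by rewrite cats0; left.
by rewrite -rcons_cat => /rcons_inj [-> _]; right; apply: prefix_prefix.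
Qed.

Section KaryTree.
Variable k : nat.
Notation V := (kary_vertex k).
Notation adj := (@kary_adj k).

Lemma kary_parent_rcons (v : V) i : kary_parent_is (rcons v i) v.
Proof.
apply/andP; split; first by case: v.
by rewrite size_rcons -cats1 take_size_cat.
Qed.

Lemma kary_parent_isP (v w : V) : kary_parent_is v w -> exists i, v = rcons w i.
Proof.
case/lastP: v => [|u i] // /andP [_ /eqP ->]; exists i.
by rewrite size_rcons -[in take _ _]cats1 take_size_cat.
Qed.

Lemma kary_adjP (v w : V) :
  adj v w -> (exists i, v = rcons w i) \/ (exists i, w = rcons v i).
Proof. by case/orP=> /kary_parent_isP; [left | right]. Qed.

Lemma kary_adj_child (v : V) i : adj v (rcons v i).
Proof. by rewrite /kary_adj kary_parent_rcons orbT. Qed.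

Lemma kary_adj_parent (v : V) i : adj (rcons v i) v.
Proof. by rewrite /kary_adj kary_parent_rcons. Qed.

Lemma kary_not_clustered n m (g : V -> 'I_n) :
  (forall v, exists i, g (rcons v i) = g v) -> ~ dist_clustered_coloring adj m g.
Proof.
move=> same_child [K [_ [compK _]]].
apply: (mono_comp_unbounded (h := size) _ (compK [::])) => v.
have [i gi] := same_child v.
by exists (rcons v i); rewrite ?kary_adj_child ?size_rcons.
Qed.

Definition depth_parity (v : V) : 'I_2 := inord (odd (size v)).

Lemma depth_parity_proper (v w : V) : adj v w -> depth_parity v != depth_parity w.
Proof.
case/kary_adjP=> [[i ->]|[i ->]];
  by rewrite /depth_parity size_rcons /= -val_eqE /= !inordK; case: (odd _).
Qed.

Lemma kary_not_clustered_lt2 n m (g : V -> 'I_n) :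
  0 < k -> n < 2 -> ~ dist_clustered_coloring adj m g.
Proof.
move=> k_gt0 n_lt2; apply: kary_not_clustered => v; exists (Ordinal k_gt0).
have ord_small (c : 'I_n) : val c = 0.
  by case: c => c /= /leq_trans/(_ n_lt2); rewrite ltnS leqn0 => /eqP.
by apply: val_inj; rewrite !ord_small.
Qed.

Lemma even_or_child_of_even (v : V) :
  ~~ odd (size v) \/ exists w i, v = rcons w i /\ ~~ odd (size w).
Proof.
case/lastP: v => [|w i]; first by left.
rewrite size_rcons /=; case: (boolP (odd (size w))) => [odd_w | even_w].
  by left; rewrite negbK.
by right; exists w, i.
Qed.

(* Reading a vertex two letters at a time, the pair (i, j) below a vertex of
   colour c gives colour [lift c j], which ranges over the colours other
   than c. *)
Fixpoint star_colour_from (c : 'I_k.+1) (v : V) : 'I_k.+1 :=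
  if v is _ :: j :: w then star_colour_from (lift c j) w else c.

Definition star_colour (v : V) : 'I_k.+1 := star_colour_from ord0 v.

Lemma star_colour_from_cat c (v w : V) : ~~ odd (size v) ->
  star_colour_from c (v ++ w) = star_colour_from (star_colour_from c v) w.
Proof.
elim: {v}(size v) {-2}v c (leqnn (size v)) => [|n IHn] [|a [|b v]] c //= v_le.
by rewrite negbK => even_v; rewrite IHn // -ltnS (leq_trans _ v_le).
Qed.

Lemma star_colour_child (v : V) i :
  ~~ odd (size v) -> star_colour (rcons v i) = star_colour v.
Proof. by move=> even_v; rewrite /star_colour -cats1 star_colour_from_cat. Qed.

Lemma star_colour_grandchild (v : V) i j : ~~ odd (size v) ->
  star_colour (rcons (rcons v i) j) = lift (star_colour v) j.
Proof.
by move=> even_v; rewrite /star_colour -!cats1 -catA star_colour_from_cat.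
Qed.

Lemma star_colour_grandchild_neq (v : V) i j :
  star_colour (rcons (rcons v i) j) != star_colour v.
Proof.
case: (even_or_child_of_even v) => [even_v | [w [l [-> even_w]]]].
  by rewrite star_colour_grandchild // eq_sym neq_lift.
rewrite star_colour_child; last by rewrite !size_rcons /= negbK.
by rewrite star_colour_grandchild // star_colour_child // eq_sym neq_lift.
Qed.

Definition star_centre (v : V) : V :=
  if odd (size v) then take (size v).-1 v else v.

Lemma star_centre_even (v : V) : ~~ odd (size v) -> star_centre v = v.
Proof. by rewrite /star_centre => /negbTE ->. Qed.

Lemma star_centre_child (v : V) i :
  ~~ odd (size v) -> star_centre (rcons v i) = v.
Proof.
by move=> even_v; rewrite /star_centre size_rcons /= even_v -cats1 take_size_cat.
Qed.

Lemma star_centre_adj (v w : V) :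
  adj v w -> star_colour v = star_colour w -> star_centre v = star_centre w.
Proof.
have child_case (u : V) i : star_colour (rcons u i) = star_colour u ->
    star_centre (rcons u i) = star_centre u.
  case: (even_or_child_of_even u) => [even_u | [t [l [-> even_t]]]].
    by rewrite star_centre_child // star_centre_even.
  rewrite star_colour_grandchild // star_colour_child // => /eqP.
  by rewrite eq_sym (negbTE (neq_lift _ _)).
case/kary_adjP=> [[i ->] | [i ->]]; first exact: child_case.
by move/esym/child_case/esym.
Qed.

Lemma mono_conn_star_centre (x y : V) :
  mono_conn adj star_colour x y -> star_centre y = star_centre x.
Proof. by apply: mono_conn_invariant => a b; apply: star_centre_adj. Qed.

Lemma star_centre_mono_conn (x y : V) :
  star_centre x = star_centre y -> mono_conn adj star_colour x y.
Proof.
case: (even_or_child_of_even x) => [even_x | [u [i [-> even_u]]]];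
case: (even_or_child_of_even y) => [even_y | [w [j [-> even_w]]]].
- by rewrite !star_centre_even // => ->; apply: mono_conn_refl.
- rewrite (star_centre_even even_x) (star_centre_child _ even_w) => ->.
  apply: (mono_conn_rcons (mono_conn_refl _ _ _)).
    exact: kary_adj_child.
  exact: star_colour_child.
- rewrite (star_centre_even even_y) (star_centre_child _ even_u) => <-.
  apply: (mono_conn_rcons (mono_conn_refl _ _ _)).
    exact: kary_adj_parent.
  by rewrite star_colour_child.
- rewrite !star_centre_child // => <-.
  apply: (mono_conn_rcons (y := u));
    [| exact: kary_adj_child | by rewrite !star_colour_child].
  apply: (mono_conn_rcons (mono_conn_refl _ _ _)).
    exact: kary_adj_parent.
  by rewrite star_colour_child.
Qed.

Lemma star_centre_dist2 (a b : V) : dist_le adj 2 a b ->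
  star_colour a = star_colour b -> star_centre a = star_centre b.
Proof.
case=> [[|c [|d [|? ?]]]] [+ <- ?] //= => [/andP [ab _] | /and3P [ac cd _]].
  exact: star_centre_adj.
have grandchild_colour (u : V) i j :
    star_colour (rcons (rcons u i) j) <> star_colour u.
  by move/eqP; rewrite (negbTE (star_colour_grandchild_neq _ _ _)).
case/kary_adjP: ac cd => [[i ->] | [i ->]] /kary_adjP [[j cd] | [j ->]].
- by rewrite cd => /grandchild_colour.
- case: (even_or_child_of_even c) => [even_c | [u [l [-> even_u]]]].
    by rewrite !star_centre_child.
  by rewrite !star_colour_grandchild // => /lift_inj ->.
- by case/rcons_inj: cd => ->.
- by move=> /esym /grandchild_colour.
Qed.

Lemma star_colouring_clustered : dist_clustered_coloring adj 2 star_colour.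
Proof.
exists k.+1; split=> //; split.
  move=> x s uniq_s sx.
  pose star := star_centre x :: [seq rcons (star_centre x) i | i <- enum 'I_k].
  have -> : k.+1 = size star by rewrite /= size_map size_enum_ord.
  apply: uniq_leq_size => // y /sx /mono_conn_star_centre.
  case: (even_or_child_of_even y) => [even_y | [u [i [-> even_u]]]].
    by rewrite star_centre_even // => ->; apply: mem_head.
  rewrite star_centre_child // => ->; rewrite inE; apply/orP; right.
  by apply/mapP; exists i; rewrite ?mem_enum.
move=> x y xy nxy a b xa yb /star_centre_dist2 ab.
apply: nxy; apply: star_centre_mono_conn.
rewrite -(mono_conn_star_centre xa) -(mono_conn_star_centre yb) ab //.
by rewrite (mono_conn_colour xa) (mono_conn_colour yb).
Qed.

Lemma kary_prefix_adj (u z w : V) i :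
  prefix (rcons u i) z -> adj z w -> w != u -> prefix (rcons u i) w.
Proof.
move=> uz /kary_adjP [[j zw] | [j ->] _]; last first.
  exact: prefix_trans uz (prefix_rcons _ _).
move: uz; rewrite zw => /prefix_rcons_split [/rcons_inj [-> _] | //].
by rewrite eqxx.
Qed.

Lemma mono_conn_subtree n (g : V -> 'I_n) (u : V) i y :
  g (rcons u i) != g u -> mono_conn adj g (rcons u i) y -> prefix (rcons u i) y.
Proof.
set c := rcons u i => gcu [p [cp <-]].
suff: forall z, prefix c z ->
    path (fun a b => adj a b && (g b == g c)) z p -> prefix c (last z p).
  by apply; first exact: prefix_refl.
elim: p {cp} => [|w p IHp] z //= cz /andP [/andP [zw /eqP gw]].
apply: IHp; apply: (kary_prefix_adj cz zw).
by apply: contraNneq gcu => wu; rewrite -gw wu.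
Qed.

Lemma clustered2_sibling_colour n (g : V -> 'I_n) (u : V) i j :
  dist_clustered_coloring adj 2 g -> i != j ->
  g (rcons u i) = g (rcons u j) -> g (rcons u i) = g u.
Proof.
move=> [_ [_ [_ far]]] ij gij; apply/eqP/negPn/negP => gi.
have not_conn : ~ mono_conn adj g (rcons u i) (rcons u j).
  move=> /(mono_conn_subtree gi); rewrite prefixE !size_rcons -(size_rcons u j).
  by rewrite take_size => /eqP /rcons_inj [ji]; rewrite ji eqxx in ij.
apply: (far _ _ gij not_conn _ _ (mono_conn_refl _ _ _) (mono_conn_refl _ _ _)).
by exists [:: u; rcons u j]; rewrite /= kary_adj_parent kary_adj_child.
Qed.

Lemma clustered2_same_colour_child n (g : V -> 'I_n) (u : V) :
  n <= k -> dist_clustered_coloring adj 2 g -> exists i, g (rcons u i) = g u.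
Proof.
move=> n_le_k gcl.
pose h (o : option 'I_k) := if o is Some i then g (rcons u i) else g u.
have : ~~ injectiveb h.
  apply: contraL n_le_k => /injectiveP/leq_card.
  by rewrite card_option !card_ord -ltnNge.
case/injectivePn=> [[i|] [[j|] //= ij hij]]; last by exists j.
  by exists i; apply: (clustered2_sibling_colour gcl ij).
by exists i.
Qed.

End KaryTree.

Theorem mainTheorem8 (k : nat) (hk : 2 <= k) :
  is_dist_clustered_chi (@kary_adj k) 1 (Some 2) /\
  is_dist_clustered_chi (@kary_adj k) 2 (Some k.+1).
Proof.
have k_gt0 : 0 < k by apply: ltnW.
split; split.
- exists (@depth_parity k); apply: proper_colouring_clustered1.
  exact: depth_parity_proper.
- by move=> n n_lt2 [g gcl]; apply: (kary_not_clustered_lt2 k_gt0 n_lt2 gcl).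
- by exists (@star_colour k); apply: star_colouring_clustered.
- move=> n n_le_k [g gcl]; apply: (kary_not_clustered _ gcl) => u.
  exact: clustered2_same_colour_child.
Qed.
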